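(* For every $n\geq 1$, $$\sum_{T\in \mathcal P_n}t^{\mathrm{eld}(T)}\prod_{i=1}^{n}x_i^{\mathrm{young}_T(i)}=\prod_{k=0}^{n-2}(x_1+\cdots+x_n+kt).$$
   Context: All trees are rooted trees whose vertices are labeled by distinct positive integers. A vertex $j$ is a descendant of $i$ if the path from the root to $j$ passes through $i$ (every vertex is a descendant of itself); $\beta_T(i)$ is the smallest descendant of $i$. A child of $i$ is a descendant joined to $i$ by an edge; children of the same vertex are brothers. A plane tree is a rooted tree in which the children of each vertex are linearly ordered (left to right). In a plane tree $T$, a vertex $j$ is elder if it has a brother $k$ to its right with $\beta_T(k)<\beta_T(j)$. $\mathrm{eld}_T(v)$ is the number of elder children of $v$, $\mathrm{eld}(T)$ the total number of elder vertices, $\deg_T(v)$ the number of children of $v$, and $\mathrm{young}_T(v)=\deg_T(v)-\mathrm{eld}_T(v)$. $\mathcal P_n$ is the set of all plane trees on vertex set $[n]=\{1,\dots,n\}$ (any root). The empty product equals $1$. *)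

From mathcomp Require Import all_boot all_order all_algebra.
Set Implicit Arguments. Unset Strict Implicit. Unset Printing Implicit Defensive.
Import GRing.Theory.

(* Encoding of a plane tree on the vertex set {0,...,n-1} (vertex i stands for
   the paper's label i+1; the shift preserves the order of labels):
   - par : parent function; the root r is the unique vertex with par r = r;
   - pos : position of a vertex among its brothers (0 = leftmost);
           the root has position 0 (normalisation).
   Every plane tree on [n] corresponds to exactly one valid pair (par,pos). *)
Notation ptree n := ({ffun 'I_n -> 'I_n} * {ffun 'I_n -> 'I_n})%type.

Section PlaneTree.
Variable n : nat.
Implicit Types (T : ptree n) (i j k v : 'I_n).

Definition par T := T.1.
Definition pos T := T.2.

Definition is_rootv T v : bool := par T v == v.

Definition desc T i j : bool := [exists k : 'I_n.+1, iter k (par T) j == i].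

Definition child T i j : bool := (par T j == i) && (j != i).

Definition deg T v : nat := #|[pred j | child T v j]|.

Definition is_plane_tree T : bool :=
  [&& #|[pred v | is_rootv T v]| == 1,
      [forall j, exists k : 'I_n.+1, is_rootv T (iter k (par T) j)],
      [forall v, is_rootv T v ==> (pos T v == 0 :> nat)],
      [forall i, forall j, child T i j ==> (pos T j < deg T i)] &
      [forall i, forall j, forall k,
         [&& child T i j, child T i k & pos T j == pos T k] ==> (j == k)]].

Definition beta T i : nat := \big[minn/n]_(j | desc T i j) (val j).

Definition elder T j : bool :=
  [exists k, [&& child T (par T j) j, child T (par T j) k,
                 pos T j < pos T k & beta T k < beta T j]].

Definition eldv T v : nat := #|[pred j | child T v j && elder T j]|.
Definition eld T : nat := #|[pred j | elder T j]|.
Definition young T v : nat := deg T v - eldv T v.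

End PlaneTree.

(* Fix the parent map F of a rooted tree. The plane trees over F differ only in the
   left-to-right order of each set of brothers, and eld and young split as sums over
   the parent vertex, so the weighted sum factorises over the vertices. Among the
   children of a vertex v, the leftmost one is elder unless its least descendant is
   the smallest among its brothers; peeling off leftmost children shows that the
   orders of d children contribute x_v (x_v + t) ... (x_v + (d-1) t).
   These products are summed over rooted trees through forests: cutting the edge
   above a non-root c of a forest with m+1 edges leaves a forest with m edges in which
   c is a root and its former parent p lies in another tree, and the weight loses the
   factor x_p + deg(p) t. Double counting gives
   (m+1) G(m+1) = (n-m-1) (x_1 + ... + x_n + m t) G(m),
   so (n-1)! times the sum over trees is (n-1)! times the product; the factorial is
   cancelled in the polynomial ring over Z, and the identity is then specialised. *)

From mathcomp Require Import all_boot all_order all_algebra.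
From mathcomp Require Import zify ring.
From mathcomp Require Import mpoly.
Set Implicit Arguments. Unset Strict Implicit. Unset Printing Implicit Defensive.
Import GRing.Theory.

(** * Rising products and arrangements of brothers *)

Section Rising.
Variable R : pzSemiRingType.
Local Open Scope ring_scope.

Definition rising (t y : R) (d : nat) : R := \prod_(i < d) (y + i%:R * t).

Lemma risingS t y d : rising t y d.+1 = rising t y d * (y + d%:R * t).
Proof. exact: big_ord_recr. Qed.

End Rising.

Lemma insubd0 n (j : 'I_n) : insubd j 0 = 0 :> nat.
Proof. by rewrite val_insubd (leq_ltn_trans _ (ltn_ord j)). Qed.

Section Arrangement.
Variables (n : nat) (key : 'I_n -> nat).
Implicit Types (C : {set 'I_n}) (s : {ffun 'I_n -> 'I_n}) (j k : 'I_n).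

(* [s j] is the position of [j] in [C], counted from the left; positions outside [C]
   are normalised to 0, so that every linear order of [C] has exactly one code. *)
Definition arrangement C s : bool :=
  [&& [forall j in C, s j < #|C|],
      [forall j in C, forall k in C, (s j == s k) ==> (j == k)] &
      [forall j in ~: C, s j == 0 :> nat]].

Definition elder_in C s j : bool := [exists k in C, (s j < s k) && (key k < key j)].
Definition nelder C s : nat := #|[pred j in C | elder_in C s j]|.

Lemma arrangementP C s : reflect
  [/\ forall j, j \in C -> s j < #|C|, {in C &, injective s} &
      forall j, j \notin C -> s j = 0 :> nat]
  (arrangement C s).
Proof.
apply: (iffP and3P) => [[/forall_inP lt_sC /forall_inP inj_s /forall_inP s0]|[lt_sC inj_s s0]].
  split=> [//|j k jC kC sjk|j jNC]; last by apply/eqP/s0; rewrite inE.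
  by have /forall_inP/(_ k kC) := inj_s j jC; rewrite sjk eqxx => /eqP.
split; first by apply/forall_inP.
  apply/forall_inP => j jC; apply/forall_inP => k kC.
  by apply/implyP => /eqP /(inj_s _ _ jC kC) ->.
by apply/forall_inP => j; rewrite inE => /s0 ->.
Qed.

Lemma eq_nelder C s1 s2 : {in C, s1 =1 s2} -> nelder C s1 = nelder C s2.
Proof.
move=> s12; apply: eq_card => j; rewrite !inE; have [jC|//] := boolP (j \in C).
by apply: eq_existsb => k; have [kC|//] := boolP (k \in C); rewrite /= !s12.
Qed.

Lemma nelder_le C s : nelder C s <= #|C|.
Proof. by apply/subset_leq_card/subsetP => j /andP[]. Qed.

Lemma arrangement_has_leftmost C s : arrangement C s -> 0 < #|C| ->
  exists2 j, j \in C & s j = 0 :> nat.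
Proof.
move=> /arrangementP[lt_sC inj_s _] C_gt0; set I := [seq val (s j) | j <- enum C].
have I_uniq : uniq I.
  rewrite map_inj_in_uniq ?enum_uniq // => j k; rewrite !mem_enum => jC kC /val_inj.
  exact: inj_s.
have I_sub : {subset I <= iota 0 #|C|}.
  by move=> _ /mapP[j jC ->]; rewrite mem_iota lt_sC // -mem_enum.
have size_I : size (iota 0 #|C|) <= size I by rewrite size_iota size_map -cardE.
have [_ eqI] := uniq_min_size I_uniq I_sub size_I.
have : 0 \in iota 0 #|C| by rewrite mem_iota.
by rewrite -eqI => /mapP[j]; rewrite mem_enum => jC /esym; exists j.
Qed.

Lemma arrangement_set0 s : arrangement set0 s = (s == [ffun j => insubd j 0]).
Proof.
apply/arrangementP/eqP => [[_ _ s0]|->].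
  by apply/ffunP => j; apply/val_inj; rewrite /= ffunE insubd0 s0 ?inE.
by split=> [j|j k|j _]; rewrite ?inE // ffunE insubd0.
Qed.

Lemma sum_arrangement_by_leftmost (V : nmodType) (G : {ffun 'I_n -> 'I_n} -> V) C : 0 < #|C| ->
  (\sum_(s | arrangement C s) G s =
   \sum_(j0 in C) \sum_(s | arrangement C s && (s j0 == 0 :> nat)) G s)%R.
Proof.
move=> C_gt0; rewrite [RHS](exchange_big_dep (arrangement C)) /=; last by move=> j s _ /andP[].
apply: eq_bigr => s arr; have [j0 j0C sj0] := arrangement_has_leftmost arr C_gt0.
have /arrangementP[_ inj_s _] := arr.
rewrite (big_pred1 j0) // => j; rewrite arr /=; apply/idP/eqP => [/andP[jC /eqP sj]|->].
  by apply: inj_s => //; apply/val_inj; rewrite /= sj sj0.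
by rewrite j0C sj0.
Qed.

Definition insert_leftmost C j0 s : {ffun 'I_n -> 'I_n} :=
  [ffun j => insubd j (if j \in C :\ j0 then (s j).+1 else 0)].
Definition remove_leftmost C j0 s : {ffun 'I_n -> 'I_n} :=
  [ffun j => insubd j (if j \in C :\ j0 then (s j).-1 else 0)].

Section Insertion.
Variables (C : {set 'I_n}) (j0 : 'I_n).
Hypothesis j0C : j0 \in C.

Let card_CD1 : #|C :\ j0|.+1 = #|C|.
Proof. by rewrite (cardsD1 j0 C) j0C. Qed.

Lemma val_insert_leftmost s j : arrangement (C :\ j0) s ->
  insert_leftmost C j0 s j = (if j \in C :\ j0 then (s j).+1 else 0) :> nat.
Proof.
move=> /arrangementP[lt_s _ _]; rewrite ffunE val_insubd ifT //.
case: ifP => [jCD|_]; last exact: leq_ltn_trans (ltn_ord j).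
have := lt_s j jCD; rewrite -ltnS card_CD1 => lt_sC; apply: leq_trans lt_sC _.
by rewrite (leq_trans (max_card _)) ?card_ord.
Qed.

Lemma val_remove_leftmost s j :
  remove_leftmost C j0 s j = (if j \in C :\ j0 then (s j).-1 else 0) :> nat.
Proof.
rewrite ffunE val_insubd ifT //; case: ifP => _; last exact: leq_ltn_trans (ltn_ord j).
exact: leq_ltn_trans (leq_pred _) (ltn_ord _).
Qed.

Lemma insert_leftmost_j0 s : insert_leftmost C j0 s j0 = 0 :> nat.
Proof. by rewrite ffunE !inE eqxx /= insubd0. Qed.

Lemma arrangement_insert_leftmost s : arrangement (C :\ j0) s ->
  arrangement C (insert_leftmost C j0 s).
Proof.
move=> arr; have /arrangementP[lt_s inj_s _] := arr.
have inCD1 j : j \in C -> (j \in C :\ j0) = (j != j0) by move=> jC; rewrite !inE jC andbT.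
apply/arrangementP; split=> [j jC|j k jC kC|j jNC]; rewrite ?val_insert_leftmost //.
- by case: ifP => [jCD|_]; rewrite -card_CD1 // ltnS lt_s.
- move/(congr1 val); rewrite /= !val_insert_leftmost // !inCD1 //.
  case: eqVneq => [->|jj0]; case: eqVneq => [->|kj0] //= [/val_inj].
  by apply: inj_s; rewrite !inE ?jj0 ?kj0.
- by rewrite inE (negPf jNC) andbF.
Qed.

Lemma insert_leftmostK s : arrangement (C :\ j0) s ->
  remove_leftmost C j0 (insert_leftmost C j0 s) = s.
Proof.
move=> arr; have /arrangementP[_ _ s0] := arr.
apply/ffunP => j; apply/val_inj => /=; rewrite val_remove_leftmost val_insert_leftmost //.
by case: (boolP (j \in C :\ j0)) => [//|/s0 ->].
Qed.

Lemma arrangement_gt0 s j : arrangement C s -> s j0 = 0 :> nat -> j \in C :\ j0 -> 0 < s j.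
Proof.
move=> /arrangementP[_ inj_s _] sj0; rewrite !inE => /andP[jj0 jC].
rewrite lt0n; apply: contra jj0 => /eqP sj; apply/eqP/inj_s => //.
by apply/val_inj; rewrite /= sj sj0.
Qed.

Lemma arrangement_remove_leftmost s : arrangement C s -> s j0 = 0 :> nat ->
  arrangement (C :\ j0) (remove_leftmost C j0 s).
Proof.
move=> arr sj0; have /arrangementP[lt_s inj_s _] := arr.
have pos j : j \in C :\ j0 -> 0 < s j := arrangement_gt0 arr sj0.
apply/arrangementP; split=> [j jC|j k jC kC|j jNC]; rewrite ?val_remove_leftmost ?(negPf jNC) //.
  rewrite jC -ltnS prednK ?pos // card_CD1 lt_s //.
  by move: jC; rewrite inE => /andP[].
move/(congr1 val); rewrite /= !val_remove_leftmost jC kC => /(congr1 succn).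
rewrite !prednK ?pos // => /val_inj /inj_s; apply; move: jC kC; rewrite !inE.
  by case/andP.
by move=> _ /andP[].
Qed.

Lemma remove_leftmostK s : arrangement C s -> s j0 = 0 :> nat ->
  insert_leftmost C j0 (remove_leftmost C j0 s) = s.
Proof.
move=> arr sj0; have /arrangementP[_ _ s0] := arr.
apply/ffunP => j; apply/val_inj => /=.
rewrite val_insert_leftmost ?arrangement_remove_leftmost // val_remove_leftmost.
case: (boolP (j \in C :\ j0)) => [jCD|]; first by rewrite prednK // (arrangement_gt0 arr sj0).
by rewrite !inE => /nandP[/negbNE/eqP ->|/s0 ->].
Qed.

Lemma sum_arrangement_leftmost (V : nmodType) (G : {ffun 'I_n -> 'I_n} -> V) :
  (\sum_(s | arrangement C s && (s j0 == 0 :> nat)) G s =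
   \sum_(s | arrangement (C :\ j0) s) G (insert_leftmost C j0 s))%R.
Proof.
rewrite (reindex_onto (insert_leftmost C j0) (remove_leftmost C j0)) => [|s /andP[arr /eqP sj0]].
  apply: eq_bigl => s; apply/idP/idP => [/andP[/andP[arr sj0]] /eqP <-|arr].
    by apply: arrangement_remove_leftmost => //; apply/eqP.
  by rewrite arrangement_insert_leftmost // insert_leftmost_j0 insert_leftmostK ?eqxx.
exact: remove_leftmostK.
Qed.

Lemma nelder_insert_leftmost s : arrangement (C :\ j0) s ->
  nelder C (insert_leftmost C j0 s) = [exists k in C, key k < key j0] + nelder (C :\ j0) s.
Proof.
move=> arr; set s' := insert_leftmost C j0 s.
have elder_j0 : elder_in C s' j0 = [exists k in C, key k < key j0].
  apply/exists_inP/exists_inP => [[k kC /andP[_ lt_k]]|[k kC lt_k]]; exists k => //.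
  rewrite lt_k andbT insert_leftmost_j0 val_insert_leftmost // ifT // !inE kC andbT.
  by apply: contraTneq lt_k => ->; rewrite ltnn.
have elder_j j : j \in C :\ j0 -> elder_in C s' j = elder_in (C :\ j0) s j.
  move=> jCD; apply/exists_inP/exists_inP => [[k kC]|[k kCD]].
    rewrite !val_insert_leftmost // jCD; case: ifP => // kCD; rewrite ltnS => lt_jk.
    by exists k.
  exists k; first by move: kCD; rewrite !inE => /andP[].
  by rewrite !val_insert_leftmost // jCD kCD ltnS.
rewrite /nelder (cardD1 j0) inE j0C elder_j0 /=; congr (_ + _).
apply: eq_card => j; rewrite !inE; case: eqVneq => [->|jj0] //=.
by have [jC|//] := boolP (j \in C); rewrite elder_j // !inE jj0.
Qed.

End Insertion.

Section Weight.
Variables (R : comPzRingType) (y t : R).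
Local Open Scope ring_scope.

Definition arrangement_weight C s := t ^+ nelder C s * y ^+ (#|C| - nelder C s).

Lemma arrangement_weight_insert_leftmost C j0 s : j0 \in C -> arrangement (C :\ j0) s ->
  arrangement_weight C (insert_leftmost C j0 s) =
  (if [exists k in C, (key k < key j0)%N] then t else y) * arrangement_weight (C :\ j0) s.
Proof.
move=> j0C arr; have le_e := nelder_le (C :\ j0) s.
rewrite /arrangement_weight nelder_insert_leftmost // (cardsD1 j0 C) j0C add1n.
case: ifP => _; rewrite ?add1n ?add0n; first by rewrite subSS exprS mulrA.
by rewrite subSn // exprS mulrCA.
Qed.

Lemma sum_leftmost_weight C : {in C &, injective key} -> (0 < #|C|)%N ->
  \sum_(j0 in C) (if [exists k in C, (key k < key j0)%N] then t else y) = y + (#|C|.-1)%:R * t.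
Proof.
move=> inj_key /card_gt0P[c cC]; have [m mC m_min] := arg_minnP key cC.
rewrite (bigD1 m) //= ifF; last by apply/negbTE/exists_inP => -[k kC]; rewrite ltnNge m_min.
congr (_ + _); rewrite (eq_bigr (fun _ => t)) => [|j /andP[jC jm]]; last first.
  rewrite ifT //; apply/exists_inP; exists m => //; rewrite ltn_neqAle m_min // andbT.
  by apply: contra jm => /eqP/(inj_key _ _ mC jC) ->.
rewrite sumr_const mulr_natl (cardsD1 m C) (mC : m \in C) add1n /=; congr (_ *+ _).
by apply: eq_card => j; rewrite !inE andbC.
Qed.

Lemma sum_arrangement_weight C : {in C &, injective key} ->
  \sum_(s | arrangement C s) arrangement_weight C s = rising t y #|C|.
Proof.
move: {2}#|C| (erefl #|C|) => d; elim: d C => [|d IH] C card_C inj_key.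
  have -> : C = set0 by apply: cards0_eq.
  rewrite (big_pred1 [ffun j => insubd j 0]) => [|s]; last exact: arrangement_set0.
  rewrite /arrangement_weight /rising cards0 big_ord0.
  have := nelder_le set0 [ffun j => insubd j 0]; rewrite cards0 leqn0 => /eqP ->.
  by rewrite !expr0 mulr1.
rewrite sum_arrangement_by_leftmost ?card_C // risingS.
rewrite (eq_bigr (fun j0 => (if [exists k in C, (key k < key j0)%N] then t else y) * rising t y d)).
  by rewrite -mulr_suml sum_leftmost_weight ?card_C // mulrC.
move=> j0 j0C; have card_CD1 : #|C :\ j0| = d.
  by move: card_C; rewrite (cardsD1 j0) j0C add1n => -[].
have inj_keyD1 : {in C :\ j0 &, injective key} by apply: sub_in2 inj_key => j /setD1P[].
rewrite sum_arrangement_leftmost // -card_CD1 -(IH _ card_CD1 inj_keyD1) mulr_sumr.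
by apply: eq_bigr => s arr; rewrite arrangement_weight_insert_leftmost.
Qed.

End Weight.

End Arrangement.

(** * Parent maps and weighted forests *)

Section ParentMap.
Variable n : nat.
Implicit Types (F : {ffun 'I_n -> 'I_n}) (c p u v j : 'I_n).

Definition is_root F v : bool := F v == v.
Definition acyclic F : bool := [forall j, exists k : 'I_n.+1, is_root F (iter k F j)].
Definition root_of F v : 'I_n := iter n F v.
Definition children F v : {set 'I_n} := [set j | (F j == v) && (j != v)].
Definition nchildren F v : nat := #|children F v|.
Definition nedges F : nat := #|[pred v | ~~ is_root F v]|.
(* [graft F c p] makes [p] the parent of [c]; [graft F c c] cuts [c] off as a root. *)
Definition graft F c p : {ffun 'I_n -> 'I_n} := [ffun v => if v == c then p else F v].

Lemma iter_root F v k : is_root F v -> iter k F v = v.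
Proof. by move=> /eqP Fv; elim: k => //= k ->. Qed.

Lemma iter_reached_before_n F j k : exists2 i, i < n & iter i F j = iter k F j.
Proof.
have jk := fconnect_iter F k j.
exists (findex F j (iter k F j)); last exact: iter_findex.
apply: leq_trans (findex_max jk) _.
by rewrite /order (leq_trans (max_card _)) ?card_ord.
Qed.

Lemma acyclicP F : reflect (forall j, exists k, is_root F (iter k F j)) (acyclic F).
Proof.
apply: (iffP forallP) => [acF j | reach j].
  by have /existsP[k rk] := acF j; exists k.
have [k rk] := reach j; have [i lt_in ik] := iter_reached_before_n F j k.
by apply/existsP; exists (Ordinal (leqW lt_in)); rewrite /= ik.
Qed.

Lemma is_root_root_of F v : acyclic F -> is_root F (root_of F v).
Proof.
move=> /acyclicP /(_ v) [k rk]; have [i lt_in ik] := iter_reached_before_n F v k.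
have -> : root_of F v = iter (n - i) F (iter i F v) by rewrite -iterD subnK // ltnW.
by rewrite ik iter_root.
Qed.

Lemma root_of_root F v : is_root F v -> root_of F v = v.
Proof. exact: iter_root. Qed.

(* Both sides equal [iter (i + n) F v]. *)
Lemma iter_is_root F v i : acyclic F -> is_root F (iter i F v) -> iter i F v = root_of F v.
Proof.
move=> acF ri; rewrite -(iter_root n ri) -iterD addnC iterD.
by rewrite iter_root // is_root_root_of.
Qed.

Lemma periodic_is_root F v L : acyclic F -> 0 < L -> iter L F v = v -> is_root F v.
Proof.
move=> acF L_gt0 per; have perm m : iter (L * m) F v = v.
  by elim: m => [|m IH]; rewrite ?muln0 // mulnS iterD IH.
rewrite -(perm n) -(subnK (leq_pmull n L_gt0)) iterD.
by rewrite iter_root is_root_root_of.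
Qed.

Lemma iter_first_hit F v c k : iter k F v = c ->
  exists2 i, iter i F v = c & forall l, l < i -> iter l F v != c.
Proof.
move=> kc; have hit : exists k, iter k F v == c by exists k; apply/eqP.
case: (ex_minnP hit) => i /eqP ic imin; exists i => // l li.
by apply: contraTneq li => lc; rewrite -leqNgt imin ?lc.
Qed.

Lemma eq_iter_avoid F1 F2 c v k : (forall u, u != c -> F1 u = F2 u) ->
  (forall i, i < k -> iter i F2 v != c) -> iter k F1 v = iter k F2 v.
Proof.
move=> F12; elim: k => [//|k IH] avoid.
by rewrite !iterS IH ?F12 ?avoid // => i /ltnW; apply: avoid.
Qed.

Lemma grafE F c p u : graft F c p u = if u == c then p else F u.
Proof. by rewrite ffunE. Qed.

Lemma graft_id F c p u : u != c -> graft F c p u = F u.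
Proof. by rewrite grafE => /negPf ->. Qed.

Lemma is_root_graft F c p u :
  is_root (graft F c p) u = if u == c then p == c else is_root F u.
Proof. by rewrite /is_root grafE; case: (u =P c) => // ->. Qed.

Lemma iter_graft_avoid F c p w k : acyclic F -> is_root F c -> root_of F w != c ->
  iter k (graft F c p) w = iter k F w.
Proof.
move=> acF rc wc; apply: eq_iter_avoid => [u|i _]; first exact: graft_id.
by apply: contra wc => /eqP ic; rewrite -ic iter_is_root // ic.
Qed.

Lemma acyclic_graft F c p : acyclic F -> is_root F c -> root_of F p != c ->
  acyclic (graft F c p).
Proof.
move=> acF rc pc; set G := graft F c p.
have rootG w : root_of F w != c -> is_root G (iter n G w).
  move=> wc; rewrite iter_graft_avoid // is_root_graft.
  by rewrite (negPf wc) is_root_root_of.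
apply/acyclicP => v; case: (eqVneq (root_of F v) c) => [vc|]; last first.
  by exists n; apply: rootG.
have [i ic avoid] := iter_first_hit vc.
have iGc : iter i G v = c by rewrite (eq_iter_avoid _ avoid) // => u; apply: graft_id.
by exists (n + i.+1); rewrite iterD iterS iGc grafE eqxx; apply: rootG.
Qed.

Lemma acyclic_prune F c : acyclic F -> acyclic (graft F c c).
Proof.
move=> acF; set G := graft F c c; have agree u : u != c -> G u = F u by apply: graft_id.
apply/acyclicP => v; case/boolP: [exists i : 'I_n.+1, iter i F v == c].
  case/existsP=> i /eqP /iter_first_hit [i0 i0c avoid]; exists i0.
  by rewrite (eq_iter_avoid agree avoid) i0c /is_root grafE eqxx.
move=> /existsPn avoid; exists n; rewrite (eq_iter_avoid agree) => [|i ?]; last first.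
  exact: (avoid (Ordinal (leqW _))).
rewrite is_root_graft (negPf (avoid ord_max)).
exact: is_root_root_of.
Qed.

Lemma root_of_prune F c : acyclic F -> ~~ is_root F c -> root_of (graft F c c) (F c) != c.
Proof.
move=> acF; apply: contra => /eqP /iter_first_hit [i ic avoid].
apply: (periodic_is_root (L := i.+1)) => //.
rewrite iterSr -[RHS]ic; apply: eq_iter_avoid avoid => u uc.
by rewrite graft_id.
Qed.

Lemma card_roots_nedges F : #|[pred v | is_root F v]| + nedges F = n.
Proof. by rewrite /nedges cardC card_ord. Qed.

Lemma sum_nchildren F : \sum_v nchildren F v = nedges F.
Proof.
rewrite /nchildren /nedges; under eq_bigr do rewrite -sum1_card big_mkcond /=.
rewrite exchange_big /= -[RHS]sum1_card [RHS]big_mkcond /=; apply: eq_bigr => j _.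
rewrite (bigD1 (F j)) //= big1 => [|v vF]; last by rewrite inE eq_sym (negPf vF).
by rewrite addn0 !inE eqxx /is_root eq_sym.
Qed.

Lemma card_other_roots F v : acyclic F ->
  #|[pred c | is_root F c && (root_of F v != c)]| = #|[pred c | is_root F c]| - 1.
Proof.
move=> acF; rewrite [in RHS](cardD1 (root_of F v)) inE is_root_root_of // add1n subn1.
by apply: eq_card => c; rewrite !inE andbC eq_sym.
Qed.

Lemma nchildren_graft F c p u : is_root F c -> p != c ->
  nchildren (graft F c p) u = nchildren F u + (p == u).
Proof.
move=> rc pc; rewrite /nchildren (cardsD1 c) addnC; congr (_ + _).
  apply: eq_card => j; rewrite !inE grafE.
  by case: eqVneq => //= ->; rewrite (eqP rc) andbN.
by rewrite !inE grafE eqxx; case: eqVneq => //= <-; rewrite eq_sym pc.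
Qed.

Lemma nedges_graft F c p : is_root F c -> p != c -> nedges (graft F c p) = (nedges F).+1.
Proof.
move=> rc pc; rewrite /nedges (cardD1 c) !inE is_root_graft eqxx (negPf pc) add1n.
congr _.+1; apply: eq_card => u; rewrite !inE is_root_graft.
by case: eqVneq => // ->; rewrite rc.
Qed.

Lemma graft_eq_self F c : (graft F c c == F) = is_root F c.
Proof.
apply/eqP/idP => [<-|rc]; first by rewrite /is_root grafE eqxx.
by apply/ffunP => u; rewrite grafE; case: eqVneq => // ->; rewrite (eqP rc).
Qed.

Lemma graft_over F c p q : graft (graft F c p) c q = graft F c q.
Proof. by apply/ffunP => u; rewrite !grafE; case: eqVneq. Qed.

Lemma graft_pruneE m c F p :
  acyclic (graft F c p) && (nedges (graft F c p) == m.+1) && ~~ is_root (graft F c p) c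
    && ((graft (graft F c p) c c, graft F c p c) == (F, p)) =
  acyclic F && (nedges F == m) && is_root F c && (root_of F p != c).
Proof.
rewrite graft_over grafE eqxx xpair_eqE eqxx andbT graft_eq_self.
have [rc|] := boolP (is_root F c); last by rewrite !andbF.
have Fc : graft F c c = F by apply/eqP; rewrite graft_eq_self.
rewrite !andbT (is_root_graft F c p c) eqxx; apply/idP/idP.
  move=> /andP[/andP[acG /eqP nG] pc].
  have := root_of_prune (c := c) acG; rewrite graft_over grafE eqxx Fc.
  rewrite (is_root_graft F c p c) eqxx => /(_ pc) ->; rewrite andbT.
  have acF : acyclic F by rewrite -Fc -(graft_over F c p); apply: acyclic_prune.
  by rewrite acF; apply/eqP/succn_inj; rewrite -nG nedges_graft.
move=> /andP[/andP[acF /eqP nF] pF].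
have pc : p != c by apply: contraNneq pF => ->; rewrite root_of_root.
by rewrite acyclic_graft // nedges_graft // nF eqxx pc.
Qed.

Section ForestSum.
Variables (R : comPzRingType) (x : 'I_n -> R) (t : R).
Local Open Scope ring_scope.

Definition forest_weight F := \prod_v rising t (x v) (nchildren F v).
Definition forest_sum m := \sum_(F | acyclic F && (nedges F == m)) forest_weight F.
Definition attach_weight F p := x p + (nchildren F p)%:R * t.

Lemma forest_weight_graft F c p : is_root F c -> p != c ->
  forest_weight (graft F c p) = forest_weight F * attach_weight F p.
Proof.
move=> rc pc; rewrite /forest_weight (bigD1 p) // [in RHS](bigD1 p) //=.
rewrite nchildren_graft // eqxx addn1 risingS [RHS]mulrAC; congr (_ * _).
by apply: eq_bigr => v vp; rewrite nchildren_graft // eq_sym (negPf vp) addn0.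
Qed.

Lemma sum_attach_weight F : \sum_p attach_weight F p = \sum_i x i + (nedges F)%:R * t.
Proof. by rewrite big_split /= -mulr_suml -natr_sum sum_nchildren. Qed.

Lemma sum_attach_to_other_tree F : acyclic F ->
  \sum_c \sum_p (if is_root F c && (root_of F p != c) then attach_weight F p else 0)
  = (#|[pred v | is_root F v]| - 1)%:R * (\sum_i x i + (nedges F)%:R * t).
Proof.
move=> acF; rewrite exchange_big -sum_attach_weight mulr_sumr; apply: eq_bigr => p _.
by rewrite -big_mkcond sumr_const (card_other_roots p) // mulr_natl.
Qed.

Lemma forest_sum_graft m c :
  \sum_(F | acyclic F && (nedges F == m.+1) && ~~ is_root F c) forest_weight F =
  \sum_(q : {ffun 'I_n -> 'I_n} * 'I_n |
        acyclic q.1 && (nedges q.1 == m) && is_root q.1 c && (root_of q.1 q.2 != c))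
    forest_weight q.1 * attach_weight q.1 q.2.
Proof.
rewrite (reindex_onto (fun q => graft q.1 c q.2) (fun F => (graft F c c, F c))) /=.
  apply: eq_big => [[F p]|[F p]]; first exact: graft_pruneE.
  rewrite /= graft_pruneE => /andP[/andP[/andP[_ _] rc] pF].
  by apply: forest_weight_graft => //; apply: contraNneq pF => ->; rewrite root_of_root.
by move=> F _; rewrite graft_over; apply/ffunP => u; rewrite grafE; case: eqVneq => // ->.
Qed.

Lemma forest_sum_rec m :
  m.+1%:R * forest_sum m.+1 = (n - m.+1)%:R * (\sum_i x i + m%:R * t) * forest_sum m.
Proof.
rewrite /forest_sum mulr_sumr.
transitivity (\sum_(F | acyclic F && (nedges F == m.+1)) \sum_(c | ~~ is_root F c) forest_weight F).
  apply: eq_bigr => F /andP[_ /eqP nF].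
  by rewrite sumr_const -nF mulr_natl.
rewrite (exchange_big_dep predT) //=.
under eq_bigr => c _ do rewrite forest_sum_graft big_mkcond -(pair_bigA _ (fun F p =>
   if acyclic F && (nedges F == m) && is_root F c && (root_of F p != c)
   then forest_weight F * attach_weight F p else 0)) /=.
rewrite exchange_big /= mulr_sumr [RHS]big_mkcond /=; apply: eq_bigr => F _.
have [/andP[acF /eqP nF]|] := boolP (acyclic F && (nedges F == m)); last first.
  by move=> _; rewrite big1 // => c _; rewrite big1.
have -> : (n - m.+1)%N = (#|[pred v | is_root F v]| - 1)%N.
  by have := card_roots_nedges F; rewrite nF; lia.
rewrite -nF -sum_attach_to_other_tree // mulr_suml; apply: eq_bigr => c _.
rewrite mulr_suml; apply: eq_bigr => p _ /=.
by case: ifP; rewrite ?mul0r // mulrC.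
Qed.

Lemma forest_sum0 : forest_sum 0 = 1.
Proof.
rewrite /forest_sum (big_pred1 [ffun v => v]) => [|F]; last first.
  rewrite !inE; apply/idP/eqP => [/andP[_ /eqP/card0_eq noedge]|->].
    by apply/ffunP => v; have := noedge v; rewrite !inE ffunE => /negbFE /eqP.
  rewrite /nedges (eq_card0 (A := [pred v | ~~ is_root _ v])) ?andbT => [|v].
    by apply/acyclicP => j; exists 0; rewrite /is_root ffunE.
  by rewrite !inE /is_root ffunE eqxx.
rewrite /forest_weight big1 // => v _; rewrite /nchildren.
have -> : children [ffun v => v] v = set0 by apply/setP => j; rewrite !inE ffunE andbN.
by rewrite cards0 /rising big_ord0.
Qed.

Lemma forest_sum_fact m :
  m`!%:R * forest_sum m = \prod_(i < m) ((n - i.+1)%:R * (\sum_j x j + i%:R * t)).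
Proof.
elim: m => [|m IH]; first by rewrite forest_sum0 big_ord0 mulr1.
by rewrite factS natrM mulrAC forest_sum_rec big_ord_recr /= -IH; ring.
Qed.

Definition tree_sum := \sum_(F | acyclic F && (#|[pred v | is_root F v]| == 1%N)) forest_weight F.

Lemma tree_sum_fact : (0 < n)%N ->
  (n.-1)`!%:R * tree_sum = (n.-1)`!%:R * \prod_(k < n.-1) (\sum_i x i + k%:R * t).
Proof.
move=> n_gt0; have -> : tree_sum = forest_sum n.-1.
  apply: eq_bigl => F; congr (_ && _); have := card_roots_nedges F.
  by move=> ?; apply/eqP/eqP; lia.
rewrite forest_sum_fact big_split /= -natr_prod; congr (_%:R * _).
by rewrite -ffactnn ffact_prod; apply: eq_bigr => i _; lia.
Qed.

End ForestSum.

End ParentMap.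

Section TreeSum.
Local Open Scope ring_scope.

Section Transfer.
Variables (n : nat) (R S : comPzRingType) (f : {rmorphism R -> S}).
Variables (x : 'I_n -> R) (y : 'I_n -> S) (t : R) (u : S).
Hypotheses (fx : forall i, f (x i) = y i) (ft : f t = u).

Lemma rmorph_tree_sum : f (tree_sum x t) = tree_sum y u.
Proof.
rewrite rmorph_sum; apply: eq_bigr => F _; rewrite rmorph_prod.
apply: eq_bigr => v _; rewrite rmorph_prod; apply: eq_bigr => i _.
by rewrite rmorphD rmorphM rmorph_nat fx ft.
Qed.

Lemma rmorph_prod_shifted_sum m :
  f (\prod_(k < m) (\sum_i x i + k%:R * t)) = \prod_(k < m) (\sum_i y i + k%:R * u).
Proof.
rewrite rmorph_prod; apply: eq_bigr => k _.
by rewrite rmorphD rmorphM rmorph_nat rmorph_sum ft; under eq_bigr do rewrite fx.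
Qed.

End Transfer.

Lemma tree_sum_rising n (R : comNzRingType) (x : 'I_n -> R) t : (0 < n)%N ->
  tree_sum x t = \prod_(k < n.-1) (\sum_i x i + k%:R * t).
Proof.
move=> n_gt0; pose X (i : 'I_n) : {mpoly int[n.+1]} := 'X_(lift ord_max i).
have fact_neq0 : (n.-1)`!%:R != 0 :> {mpoly int[n.+1]}.
  by rewrite -mpolyC_nat mpolyC_eq0 Num.Theory.pnatr_eq0 -lt0n fact_gt0.
have generic := mulfI fact_neq0 (tree_sum_fact X 'X_ord_max n_gt0).
pose ev i := if unlift ord_max i is Some j then x j else t.
have evX i : mmap intr ev (X i) = x i by rewrite mmapX mmap1U /ev liftK.
have evT : mmap intr ev 'X_ord_max = t by rewrite mmapX mmap1U /ev unlift_none.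
have := congr1 (mmap intr ev) generic.
by rewrite (rmorph_tree_sum evX evT) (rmorph_prod_shifted_sum evX evT).
Qed.

End TreeSum.

(** * Plane trees *)

Section PlaneTree.
Variable n : nat.
Implicit Types (F pos : {ffun 'I_n -> 'I_n}) (i j k v : 'I_n).

(* This is [beta (F, pos) i], which does not depend on [pos]. *)
Definition least_desc F i : nat :=
  \big[minn/n]_(j | [exists k : 'I_n.+1, iter k F j == i]) val j.

Lemma bigmin_le_val (r : seq 'I_n) (P : pred 'I_n) i :
  i \in r -> P i -> \big[minn/n]_(j <- r | P j) val j <= i.
Proof.
elim: r => // a r IH; rewrite inE big_cons => /predU1P[<-|ir] Pi; first by rewrite Pi geq_minl.
by case: ifP => _; rewrite ?geq_min IH ?orbT.
Qed.

Lemma least_descP F i :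
  exists2 b : 'I_n, [exists k : 'I_n.+1, iter k F b == i] & least_desc F i = b.
Proof.
pose desc := fun j => [exists k : 'I_n.+1, iter k F j == i].
have desc_i : desc i by apply/existsP; exists ord0.
have [m desc_m m_min] := arg_minnP (@nat_of_ord n) desc_i; exists m => //.
apply/eqP; rewrite eqn_leq bigmin_le_val ?mem_index_enum //=.
apply: (big_ind (fun b => m <= b)) => [|a b ma mb|j /m_min //]; first exact: ltnW.
by rewrite leq_min ma.
Qed.

Lemma siblings_common_desc F v j k a b w : acyclic F ->
  j \in children F v -> k \in children F v -> iter a F w = j -> iter b F w = k -> j = k.
Proof.
move=> acF; wlog le_ab : j k a b / a <= b.
  move=> W jv kv wj wk; have [le_ab|/ltnW le_ba] := leqP a b; first exact: W wj wk.
  by apply/esym; apply: W wk wj.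
rewrite !inE => /andP[/eqP Fj jv] /andP[/eqP Fk kv] wj wk.
move: le_ab; rewrite leq_eqVlt => /predU1P[eq_ab|lt_ab]; first by rewrite -wj -wk eq_ab.
have ba_gt0 : 0 < b - a by rewrite subn_gt0.
have vk : iter (b - a).-1 F v = k.
  by rewrite -Fj -iterSr prednK // -wj -iterD subnK // ltnW.
have rv : is_root F v.
  by apply: (periodic_is_root acF ba_gt0); rewrite -(prednK ba_gt0) iterS vk.
by move: kv; rewrite -vk iter_root ?eqxx.
Qed.

Lemma least_desc_inj F v : acyclic F -> {in children F v &, injective (least_desc F)}.
Proof.
move=> acF j k jv kv; have [b /existsP[a /eqP bj] ->] := least_descP F j.
have [c /existsP[a' /eqP ck] ->] := least_descP F k.
by move=> /val_inj eq_bc; subst c; apply: siblings_common_desc acF jv kv bj ck.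
Qed.

Definition positions F pos : bool :=
  [&& [forall v, is_root F v ==> (pos v == 0 :> nat)],
      [forall i, forall j, (j \in children F i) ==> (pos j < nchildren F i)] &
      [forall i, forall j, forall k,
         [&& j \in children F i, k \in children F i & pos j == pos k] ==> (j == k)]].

Lemma positionsP F pos : reflect
  [/\ forall v, is_root F v -> pos v = 0 :> nat,
      forall i j, j \in children F i -> pos j < nchildren F i &
      forall i, {in children F i &, injective pos}]
  (positions F pos).
Proof.
apply: (iffP and3P) => [[/forallP root0 /forallP lt_pos /forallP inj_pos]|[root0 lt_pos inj_pos]].
  split=> [v|i j|i j k jv kv pjk]; first by move/(implyP (root0 v))/eqP.
    by have /forallP/(_ j)/implyP := lt_pos i.
  by have /forallP/(_ j)/forallP/(_ k)/implyP := inj_pos i; rewrite jv kv pjk eqxx => /(_ isT)/eqP.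
split; apply/forallP => i; first by apply/implyP => /root0 ->.
  by apply/forallP => j; apply/implyP => /lt_pos.
apply/forallP => j; apply/forallP => k; apply/implyP => /and3P[jv kv /eqP pjk].
by rewrite (inj_pos i j k).
Qed.

Lemma deg_nchildren F pos v : deg (F, pos) v = nchildren F v.
Proof. by apply: eq_card => j; rewrite !inE. Qed.

Lemma is_plane_treeE F pos :
  is_plane_tree (F, pos) = [&& acyclic F, #|[pred v | is_root F v]| == 1 & positions F pos].
Proof.
rewrite /is_plane_tree /positions andbCA; do 3 congr andb; congr andb.
  apply: eq_forallb => i; apply: eq_forallb => j.
  by rewrite deg_nchildren inE.
by do 3 (apply: eq_forallb => ?); rewrite !inE.
Qed.

Definition split_positions F pos : {ffun 'I_n -> {ffun 'I_n -> 'I_n}} :=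
  [ffun v => [ffun j => if j \in children F v then pos j else insubd j 0]].
Definition join_positions F (f : {ffun 'I_n -> {ffun 'I_n -> 'I_n}}) : {ffun 'I_n -> 'I_n} :=
  [ffun j => f (F j) j].

Lemma in_children_parent F j : (j \in children F (F j)) = ~~ is_root F j.
Proof. by rewrite inE eqxx eq_sym. Qed.

Lemma parent_children F v j : j \in children F v -> F j = v.
Proof. by rewrite inE => /andP[/eqP]. Qed.

Lemma split_join_positions F f :
  f \in family (fun v => [pred s | arrangement (children F v) s]) ->
  split_positions F (join_positions F f) = f.
Proof.
move=> /familyP fam; apply/ffunP => v; apply/ffunP => j; rewrite !ffunE.
have /arrangementP[_ _ out0] := fam v.
by case: ifPn => [/parent_children -> //|jNv]; apply/val_inj; rewrite /= insubd0 out0.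
Qed.

Lemma split_positions_family F pos :
  (split_positions F pos \in family (fun v => [pred s | arrangement (children F v) s]))
    && (join_positions F (split_positions F pos) == pos) = positions F pos.
Proof.
have splitE v j : split_positions F pos v j = if j \in children F v then pos j else insubd j 0.
  by rewrite !ffunE.
apply/andP/positionsP => [[/familyP fam /eqP joinK]|[root0 lt_pos inj_pos]]; split.
- by move=> v rv; rewrite -joinK ffunE splitE in_children_parent rv insubd0.
- by move=> i j ji; have /arrangementP[lt _ _] := fam i; have := lt j ji; rewrite splitE ji.
- move=> i j k ji ki pjk; have /arrangementP[_ inj _] := fam i.
  by apply: inj; rewrite // !splitE ji ki.
- apply/familyP => v; apply/arrangementP.
  split=> [j jv|j k jv kv|j jNv]; rewrite ?splitE ?jv ?kv ?(negPf jNv) ?insubd0 //.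
    exact: (lt_pos v j jv).
  exact: (inj_pos v j k jv kv).
apply/eqP/ffunP => j; rewrite ffunE splitE in_children_parent.
by case: ifPn => // /negPn rj; apply/val_inj; rewrite /= insubd0 root0.
Qed.

Lemma sum_positions_prod (R : comPzRingType) F (G : 'I_n -> {ffun 'I_n -> 'I_n} -> R) :
  (forall v (s1 s2 : {ffun 'I_n -> 'I_n}), {in children F v, s1 =1 s2} -> G v s1 = G v s2) ->
  (\sum_(pos | positions F pos) \prod_v G v pos =
   \prod_v \sum_(s | arrangement (children F v) s) G v s)%R.
Proof.
move=> G_local; rewrite bigA_distr_big_dep.
rewrite [RHS](reindex_onto (split_positions F) (join_positions F)) /=; last first.
  by move=> f; apply: split_join_positions.
apply: eq_big => pos; first by rewrite split_positions_family.
by move=> _; apply: eq_bigr => v _; apply: G_local => j jv; rewrite !ffunE jv.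
Qed.

Lemma eld_sum_eldv (T : ptree n) : eld T = \sum_v eldv T v.
Proof.
rewrite /eld /eldv; under eq_bigr do rewrite -sum1_card big_mkcond /=.
rewrite exchange_big /= -[LHS]sum1_card [LHS]big_mkcond /=; apply: eq_bigr => j _.
rewrite (bigD1 (par T j)) //= big1 => [|v vj]; last first.
  by rewrite inE /child eq_sym (negPf vj).
rewrite addn0 !inE; case eld_j: (elder T j); rewrite ?andbT ?andbF //.
by case/existsP: eld_j => k /and4P[->].
Qed.

Lemma eldv_nelder F pos v : eldv (F, pos) v = nelder (least_desc F) (children F v) pos.
Proof.
apply: eq_card => j; rewrite !inE /child /=.
case: (boolP ((F j == v) && (j != v))) => //= /andP[/eqP Fj jv].
by apply: eq_existsb => k; rewrite /child /= Fj eqxx jv !inE.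
Qed.

Section PlaneTreeWeight.
Variables (R : comPzRingType) (x : 'I_n -> R) (t : R).
Local Open Scope ring_scope.

Lemma plane_tree_weightE F pos :
  t ^+ eld (F, pos) * \prod_i x i ^+ young (F, pos) i =
  \prod_v arrangement_weight (least_desc F) (x v) t (children F v) pos.
Proof.
rewrite eld_sum_eldv -prodrXr -big_split; apply: eq_bigr => v _.
by rewrite /arrangement_weight /young eldv_nelder deg_nchildren.
Qed.

Lemma sum_plane_tree_weight F : acyclic F ->
  \sum_(pos | positions F pos) t ^+ eld (F, pos) * \prod_i x i ^+ young (F, pos) i
  = forest_weight x t F.
Proof.
move=> acF; under eq_bigr do rewrite plane_tree_weightE.
rewrite sum_positions_prod => [|v s1 s2 s12]; last by rewrite /arrangement_weight (eq_nelder _ s12).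
by apply: eq_bigr => v _; apply: sum_arrangement_weight; apply: least_desc_inj.
Qed.

End PlaneTreeWeight.

End PlaneTree.

Local Open Scope ring_scope.

Theorem theorem4p3 (n : nat) (hn : (1 <= n)%N) (R : comRingType)
    (x : 'I_n -> R) (t : R) :
  \sum_(T : ptree n | is_plane_tree T)
      t ^+ eld T * \prod_(i < n) x i ^+ young T i
  = \prod_(k < n.-1) (\sum_(i < n) x i + k%:R * t).
Proof.
rewrite -tree_sum_rising // /tree_sum.
rewrite (eq_bigl (fun T : ptree n => acyclic T.1 && (#|[pred v | is_root T.1 v]| == 1%N)
                                     && positions T.1 T.2)) => [|[F pos]]; last first.
  by rewrite is_plane_treeE andbA.
rewrite (eq_bigr (fun T => t ^+ eld (T.1, T.2) * \prod_(i < n) x i ^+ young (T.1, T.2) i));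
  last by case.
rewrite -(pair_big_dep (fun F => acyclic F && (#|[pred v | is_root F v]| == 1%N)) (@positions n)
  (fun F pos => t ^+ eld (F, pos) * \prod_(i < n) x i ^+ young (F, pos) i)) /=.
by apply: eq_bigr => F /andP[acF _]; rewrite sum_plane_tree_weight.
Qed.
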